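(* For a prime $p$ let $M_p=\{(n,p^a,np^a): n\in\mathbb{N},\ a\in\mathbb{N}\}$. There is a positive existential formula $\varphi(x,y,w)$ in the language $\{0,1,+,R\}$ such that for every prime $p$ and all $x,y,w\in\mathbb{N}$, the structure $\mathfrak{N}_p=(\mathbb{N};0,1,+,\mid_p)$ (with $R$ interpreted as $\mid_p$) satisfies $\varphi(x,y,w)$ if and only if $(x,y,w)\in M_p$.
   Context: $\mathbb{N}$ contains $0$. For a prime $p$, $x\mid_p y$ means $y=\pm xp^s$ for some $s\in\mathbb{Z}$. *)

From mathcomp Require Import all_boot all_order all_algebra.
Set Implicit Arguments. Unset Strict Implicit. Unset Printing Implicit Defensive.
Import GRing.Theory Num.Theory.

Definition pdiv (p x y : nat) : Prop :=
  exists (s : int) (e : bool),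
    ((y%:R : rat) = (-1) ^+ e * (x%:R : rat) * (p%:R : rat) ^ s)%R.

Inductive term : Type :=
  | TVar : nat -> term
  | TZero : term
  | TOne : term
  | TPlus : term -> term -> term.

Inductive pef : Type :=
  | FEq : term -> term -> pef
  | FR : term -> term -> pef
  | FAnd : pef -> pef -> pef
  | FOr : pef -> pef -> pef
  | FEx : nat -> pef -> pef.

Fixpoint teval (e : nat -> nat) (t : term) : nat :=
  match t with
  | TVar i => e i
  | TZero => 0
  | TOne => 1
  | TPlus t1 t2 => teval e t1 + teval e t2
  end.

Definition upd (e : nat -> nat) (i v : nat) : nat -> nat :=
  fun j => if j == i then v else e j.

Fixpoint sat (p : nat) (e : nat -> nat) (f : pef) : Prop :=
  match f with
  | FEq t1 t2 => teval e t1 = teval e t2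
  | FR t1 t2 => pdiv p (teval e t1) (teval e t2)
  | FAnd f1 f2 => sat p e f1 /\ sat p e f2
  | FOr f1 f2 => sat p e f1 \/ sat p e f2
  | FEx i f1 => exists v : nat, sat p (upd e i v) f1
  end.

Definition Mp (p x y w : nat) : Prop :=
  exists n a : nat, x = n /\ y = p ^ a /\ w = n * p ^ a.

(* Over N, x |_p y says that y p^i = x p^j for some i, j.  The formula is
     1 |_p y /\ x |_p w /\ (x+1) |_p (w+y) /\ (x+2) |_p (w+2y).
   The first conjunct makes y = p^a.  If X > 0, X |_p W and (X+1) |_p (W+p^a),
   clearing denominators gives X p^S + p^T = (X+1) p^U, and comparing powers of
   p forces S = T, i.e. W = X p^a, unless p divides X.  As p cannot divide both
   x and x+1, one of the pairs (x, w), (x+1, w+y) yields w = x p^a. *)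

From Pilot Require Import Defs.
From mathcomp Require Import all_boot all_order all_algebra.
From mathcomp Require Import zify.
Set Implicit Arguments. Unset Strict Implicit.
Import GRing.Theory Num.Theory.

(* Over the naturals the sign in [x |_p y] is forced and a negative exponent can
   be cleared to the other side, so [pdiv] becomes a statement in [nat]. *)
Definition pdivn (p x y : nat) := exists i j : nat, (y * p ^ i = x * p ^ j)%N.

Section RationalForm.
Local Open Scope ring_scope.

Lemma pdivP p x y : (0 < p)%N -> Defs.pdiv p x y <-> pdivn p x y.
Proof.
move=> p_gt0; have p_neq0 : (p%:R : rat) != 0 by rewrite pnatr_eq0 -lt0n.
split=> [[s [[|] /= Ey]] | [i [j Ey]]].
- have : (y%:R : rat) <= 0.
    by rewrite Ey expr1 mulN1r mulr_le0_ge0 ?exprz_ge0 // oppr_le0.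
  rewrite lern0 => /eqP y0.
  move: Ey; rewrite y0 expr1 mulN1r => /esym/eqP.
  rewrite mulf_eq0 oppr_eq0 expfz_eq0 (negbTE p_neq0) andbF orbF pnatr_eq0 => /eqP->.
  by exists 0%N, 0%N.
- move: Ey; rewrite expr0 mul1r; case: s => n Ey.
  + by exists 0%N, n; apply/eqP; rewrite muln1 -(eqr_nat rat) natrM natrX Ey.
  + exists n.+1, 0%N; apply/eqP; rewrite muln1 -(eqr_nat rat) natrM natrX Ey.
    by rewrite NegzE -invr_expz mulfVK // expf_neq0.
- exists (j%:Z - i%:Z), false; rewrite /= expr0 mul1r expfzDr // -invr_expz -!exprnP.
  have Ey' : y%:R * (p%:R : rat) ^+ i = x%:R * p%:R ^+ j by rewrite -!natrX -!natrM Ey.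
  by rewrite mulrA -Ey' mulfK // expf_neq0.
Qed.

End RationalForm.

Section PowerSums.
Variable p : nat.
Hypothesis p_gt1 : 1 < p.

Let expp_gt0 n : 0 < p ^ n.
Proof. by rewrite expn_gt0 ltnW. Qed.

Lemma sum_expn_lt_dvdn X S T U : S < T ->
  X * p ^ S + p ^ T = (X + 1) * p ^ U -> p %| X.
Proof.
move=> /subnKC <-; set k := T - S.+1 => E.
case: (leqP U S) => [U_le_S | S_lt_U].
- have p_le : p <= p ^ (S - U + k).+1 by rewrite -{1}(expn1 p) leq_exp2l.
  have pX : X <= X * p ^ (S - U) by rewrite leq_pmulr.
  have : X * p ^ (S - U) + p ^ (S - U + k).+1 = X + 1.
    apply/eqP; rewrite -(eqn_pmul2r (expp_gt0 U)) mulnDl -!mulnA -!expnD.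
    by rewrite subnK // addSn addnAC subnK // -addSn E.
  move: p_le pX; move: (X * p ^ _) (p ^ _.+1) => A B; lia.
- have : X + p ^ k.+1 = (X + 1) * p ^ (U - S).
    apply/eqP; rewrite -(eqn_pmul2r (expp_gt0 S)) mulnDl -mulnA -!expnD.
    by rewrite subnK 1?ltnW // addSn (addnC k) -addSn E.
  have p_dvd_pk : p %| p ^ k.+1 by rewrite dvdn_exp.
  move/(congr1 (dvdn p)); rewrite dvdn_addl // => ->.
  by rewrite dvdn_mull // dvdn_exp ?subn_gt0.
Qed.

Lemma sum_expn_gt_neq X S T U : 0 < X -> T < S ->
  X * p ^ S + p ^ T <> (X + 1) * p ^ U.
Proof.
move=> X_gt0 /subnKC <-; set k := S - T.+1 => E.
case: (leqP U T) => [U_le_T | T_lt_U].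
- have p_le : p <= p ^ (T - U + k).+1 by rewrite -{1}(expn1 p) leq_exp2l.
  have X2 : X * 2 <= X * p ^ (T - U + k).+1 by rewrite leq_mul2l (leq_trans p_gt1) ?orbT.
  have := expp_gt0 (T - U).
  have : X * p ^ (T - U + k).+1 + p ^ (T - U) = X + 1.
    apply/eqP; rewrite -(eqn_pmul2r (expp_gt0 U)) mulnDl -!mulnA -!expnD.
    by rewrite subnK // addSn addnAC subnK // -addSn E.
  move: X2; move: (X * p ^ _.+1) (p ^ (T - U)) => A B; lia.
- have : X * p ^ k.+1 + 1 = (X + 1) * p ^ (U - T).
    apply/eqP; rewrite -(eqn_pmul2r (expp_gt0 T)) mulnDl mul1n -!mulnA -!expnD.
    by rewrite subnK 1?ltnW // addSn (addnC k) -addSn E.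
  have p_dvd_Xpk : p %| X * p ^ k.+1 by rewrite dvdn_mull ?dvdn_exp.
  move/(congr1 (dvdn p)); rewrite dvdn_addr // dvdn_mull ?dvdn_exp ?subn_gt0 //.
  by rewrite dvdn1 => /eqP p1; move: p_gt1; rewrite p1.
Qed.

Lemma pdivn_succ_add a X W : 0 < X ->
  pdivn p X W -> pdivn p (X + 1) (W + p ^ a) -> W = X * p ^ a \/ p %| X.
Proof.
move=> X_gt0 [i [j EW]] [i' [j' EW']].
have E : X * p ^ (j + i') + p ^ (a + i + i') = (X + 1) * p ^ (j' + i).
  by rewrite !expnD !mulnA -EW -EW' !mulnDl mulnAC (mulnAC (p ^ a)).
case: (ltngtP (j + i') (a + i + i')) => [lt_ja | gt_ja | eq_ja].
- by right; apply: (sum_expn_lt_dvdn lt_ja E).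
- by case: (sum_expn_gt_neq X_gt0 gt_ja E).
- have j_eq : j = a + i by apply/eqP; rewrite -(eqn_add2r i') eq_ja.
  by left; apply/eqP; rewrite -(eqn_pmul2r (expp_gt0 i)) EW j_eq expnD mulnA.
Qed.

End PowerSums.

Lemma pdivn_mulr p x a : pdivn p x (x * p ^ a).
Proof. by exists 0, a; rewrite muln1. Qed.

Lemma pdivn1l p y : prime p -> pdivn p 1 y -> exists a, y = p ^ a.
Proof.
move=> p_prime [i [j Ey]].
have : y %| p ^ j by rewrite -[p ^ j]mul1n -Ey dvdn_mulr.
by case/(dvdn_pfactor _ _ p_prime) => a _ ->; exists a.
Qed.

Lemma pdivn0l p w : 0 < p -> pdivn p 0 w -> w = 0.
Proof.
move=> p_gt0 [i [j]]; rewrite mul0n => /eqP.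
by rewrite muln_eq0 expn_eq0 (gtn_eqF p_gt0) orbF => /eqP.
Qed.

Lemma pdivn_succ2_eq p a x w : prime p ->
  pdivn p x w -> pdivn p (x + 1) (w + p ^ a) ->
  pdivn p (x + 1 + 1) (w + p ^ a + p ^ a) -> w = x * p ^ a.
Proof.
move=> p_prime x_w x1_w1 x2_w2; have p_gt1 := prime_gt1 p_prime.
have [x0 | x_gt0] := posnP x.
  by rewrite x0 mul0n; apply: (pdivn0l (ltnW p_gt1)); rewrite -x0.
have [// | p_dvd_x] := pdivn_succ_add p_gt1 x_gt0 x_w x1_w1.
have [E1 | p_dvd_x1] := pdivn_succ_add p_gt1 (ltn_addr 1 x_gt0) x1_w1 x2_w2.
- by apply/eqP; rewrite -(eqn_add2r (p ^ a)) E1 mulnDl mul1n.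
- by move: p_dvd_x1; rewrite dvdn_addr // dvdn1 => /eqP p1; move: p_gt1; rewrite p1.
Qed.

Lemma Mp_pdivnP p x y w : prime p ->
  Mp p x y w <->
  [/\ pdivn p 1 y, pdivn p x w, pdivn p (x + 1) (w + y) & pdivn p (x + 1 + 1) (w + y + y)].
Proof.
move=> p_prime; split=> [[n [a [-> [-> ->]]]] | [/(pdivn1l p_prime) [a ->] x_w x1_w1 x2_w2]].
- by split; [rewrite -[p ^ a]mul1n | | rewrite addn1 -mulSnr | rewrite !addn1 -!mulSnr];
    apply: pdivn_mulr.
- exists x, a; split=> //; split=> //.
  exact: (pdivn_succ2_eq p_prime x_w x1_w1 x2_w2).
Qed.

Definition Mp_formula : pef :=
  let x := TVar 0 in let y := TVar 1 in let w := TVar 2 in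
  FAnd (FR TOne y) (FAnd (FR x w)
    (FAnd (FR (TPlus x TOne) (TPlus w y))
          (FR (TPlus (TPlus x TOne) TOne) (TPlus (TPlus w y) y)))).

Theorem lemma4p7 :
  exists phi : pef,
    forall p : nat, prime p ->
    forall (x y w : nat) (e : nat -> nat),
      e 0 = x -> e 1 = y -> e 2 = w ->
      (sat p e phi <-> Mp p x y w).
Proof.
exists Mp_formula => p p_prime x y w e <- <- <-.
have pdivE a b : Defs.pdiv p a b <-> pdivn p a b := pdivP a b (prime_gt0 p_prime).
rewrite Mp_pdivnP //=; split.
- by case=> /pdivE ? [/pdivE ? [/pdivE ? /pdivE ?]].
- by case=> /pdivE ? /pdivE ? /pdivE ? /pdivE ?.
Qed.
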